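(* There is an absolute constant $c>0$ such that the following holds. Let $A$ be a finite subset of $\mathbb{R}$ with $A\neq\{0\}$, and let $B$ and $C$ be finite sets of real numbers with $B+C\neq\{0\}$. Then $$|A(B+C)|\ge c\,(|A||B||C|)^{1/2}.$$
   Context: $B+C=\{b+c:b\in B,c\in C\}$ and $A(B+C)=\{a(b+c):a\in A,b\in B,c\in C\}$. *)

From HB Require Import structures.
From mathcomp Require Import all_boot all_order all_algebra.
From mathcomp Require Import finmap.
From mathcomp Require Export Rstruct.
From Stdlib Require Export Reals.
Set Implicit Arguments. Unset Strict Implicit. Unset Printing Implicit Defensive.
Import Order.TTheory GRing.Theory Num.Theory.
Local Open Scope ring_scope.
Local Open Scope fset_scope.

Definition sumset (B C : {fset R}) : {fset R} :=
  [fset (b + c)%R | b in B, c in C].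

Definition prodset (A X : {fset R}) : {fset R} :=
  [fset (a * x)%R | a in A, x in X].

From HB Require Import structures.
From mathcomp Require Import all_boot all_order all_algebra finmap.
From mathcomp Require Import Rstruct.
From Stdlib Require Import Reals.
From mathcomp Require Import ring lra zify.
Set Implicit Arguments.
Unset Strict Implicit.
Unset Printing Implicit Defensive.

Import Order.TTheory GRing.Theory Num.Theory.
Local Open Scope fset_scope.
Local Open Scope ring_scope.

(* For a in A \ {0} and b in B, the m = |A \ {0}| |B| lines x |-> a (b + x) are
   pairwise distinct and take their values on C inside P = A(B + C); let
   n = |P|.  For consecutive elements c < c' of C, each line gives the point
   (a (b + c), a (b + c')) of the grid P x P, and two lines cross between c and
   c' exactly when their points form a decreasing pair.  A crossing lemma for
   grids (no crossings means a chain, of size at most 2n; then delete points and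
   sample rows and columns at random) gives at least m^3 / (16 n^2) crossing
   pairs when m >= 4n.  Two distinct lines cross at most once, so summing over
   the |C| - 1 gaps gives (|C| - 1) m^3 / (16 n^2) <= m^2.  Together with
   |A| <= 2 |A \ {0}| and |A \ {0}|, |B|, |C| <= n this yields
   |A| |B| |C| <= 64 n^2. *)

Lemma natr_card (I : finType) (A : {pred I}) :
  (#|A|%:R : R) = \sum_i (i \in A)%:R.
Proof.
rewrite -sum1_card natr_sum big_mkcond /=.
by apply: eq_bigr => i _; case: (i \in A).
Qed.

Definition opposite_signs (x y : R) : bool := x * y < 0.
(* Arguments of type R would otherwise be read in Stdlib's R_scope. *)
Arguments opposite_signs (x y)%_ring_scope.

Lemma nondecreasing_sign_changes (f : R -> R) (s : seq R) :
  {homo f : x y / x <= y} -> sorted <=%R s ->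
  \sum_(i < (size s).-1) (opposite_signs (f s`_i) (f s`_(i.+1)))%:R <= 1 :> R.
Proof.
move=> f_homo s_sorted.
have fs_le i j : (i <= j)%nat -> (j < size s)%nat -> f s`_i <= f s`_j.
  move=> ij js; apply/f_homo/(sorted_leq_nth le_trans lexx) => //.
  by rewrite inE (leq_ltn_trans ij js).
pose P := [pred i : 'I_(size s).-1 | opposite_signs (f s`_i) (f s`_(i.+1))].
rewrite -[X in X <= _]/(\sum_i (i \in P)%:R) -natr_card lern1.
apply/card_le1_eqP => i j; rewrite !inE.
wlog ij : i j / (i <= j)%nat => [wlog_ij|] ci cj.
  by case: (leqP i j) => [|/ltnW] /wlog_ij; [apply | move=> /(_ cj ci) ->].
apply/val_inj/eqP; rewrite eqn_leq ij ?andbT ?andTb leqNgt; apply/negP => ji.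
have j_lt : (j.+1 < size s)%nat by have := ltn_ord j; lia.
have fi_pos : 0 < f s`_(i.+1).
  have := fs_le i i.+1 (leqnSn i) (leq_ltn_trans (leq_trans ji (leqnSn j)) j_lt).
  move: ci; rewrite /opposite_signs; nra.
have fj_neg : f s`_j < 0.
  have := fs_le j j.+1 (leqnSn j) j_lt; move: cj; rewrite /opposite_signs; nra.
by have := fs_le i.+1 j ji (ltnW j_lt); lra.
Qed.

Lemma affine_sign_changes (s : seq R) (a b : R) : sorted <=%R s ->
  \sum_(i < (size s).-1)
    (opposite_signs (a * s`_i + b) (a * s`_(i.+1) + b))%:R <= 1 :> R.
Proof.
move=> s_sorted; have [a_ge0|a_lt0] := leP 0 a.
  apply: (nondecreasing_sign_changes (f := fun x => a * x + b)) => // x y xy.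
  by rewrite lerD2r ler_wpM2l.
rewrite (eq_bigr (fun i : 'I__ =>
  (opposite_signs (- (a * s`_i + b)) (- (a * s`_(i.+1) + b)))%:R)).
  apply: (nondecreasing_sign_changes (f := fun x => - (a * x + b))) => // x y xy.
  by rewrite lerN2 lerD2r ler_wnM2l // ltW.
by move=> i _; rewrite /opposite_signs mulrNN.
Qed.

Section GridCrossings.
Variables (T : finType) (v : T -> R).
Hypothesis v_inj : injective v.

Definition crossing (x y : T * T) : bool :=
  opposite_signs (v x.1 - v y.1) (v x.2 - v y.2).

Definition crossings (S : {set T * T}) : nat :=
  (\sum_(x in S) \sum_(y in S) crossing x y)%nat.

Lemma crossingC x y : crossing x y = crossing y x.
Proof. by rewrite /crossing /opposite_signs -mulrNN !opprB. Qed.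

Lemma crossing_neq x y : crossing x y -> (x.1 != y.1) && (x.2 != y.2).
Proof.
by rewrite /crossing /opposite_signs; case: eqP => [->|_]; case: eqP => [->|_];
  rewrite ?subrr ?mul0r ?mulr0 ?ltxx.
Qed.

Lemma noncrossing_comparable x y : ~~ crossing x y ->
  (v x.1 <= v y.1) && (v x.2 <= v y.2) || (v y.1 <= v x.1) && (v y.2 <= v x.2).
Proof.
rewrite /crossing /opposite_signs -leNgt => ge0.
case: (leP (v x.1) (v y.1)) => h1; case: (leP (v x.2) (v y.2)) => h2 //=;
  rewrite ?orbF ?(ltW h1) ?(ltW h2) //=; nra.
Qed.

Definition rank (X : {set T}) (t : T) : nat := #|[set s in X | v s < v t]|.

Lemma rank_le (X : {set T}) t t' : v t <= v t' -> (rank X t <= rank X t')%nat.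
Proof.
move=> le; apply: subset_leq_card; apply/subsetP => s; rewrite !inE.
by case/andP=> -> /lt_le_trans; apply.
Qed.

Lemma rank_lt (X : {set T}) t t' : t \in X -> v t < v t' -> (rank X t < rank X t')%nat.
Proof.
move=> tX lt; apply: proper_card; apply/properP; split.
  by apply/subsetP => s; rewrite !inE => /andP[-> /lt_trans]; apply.
by exists t; rewrite !inE ?tX ?lt ?ltxx.
Qed.

Lemma rank_lt_card (X : {set T}) t : t \in X -> (rank X t < #|X|)%nat.
Proof.
move=> tX; apply: proper_card; apply/properP; split.
  by apply/subsetP => s; rewrite !inE => /andP[].
by exists t; rewrite ?inE ?tX ?ltxx.
Qed.

(* Without crossings, x |-> rank X x.1 + rank Y x.2 is injective on S. *)
Lemma noncrossing_card_le (S : {set T * T}) (X Y : {set T}) :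
  S \subset setX X Y -> {in S &, forall x y, ~~ crossing x y} ->
  (#|S| <= #|X| + #|Y|)%nat.
Proof.
move=> /subsetP SXY nocross.
pose h x := (rank X x.1 + rank Y x.2)%nat.
have h_lt x y : x \in S -> v x.1 <= v y.1 -> v x.2 <= v y.2 -> x != y ->
    (h x < h y)%nat.
  case: x y => [x1 x2] [y1 y2] /SXY /setXP[xX xY] /= le1 le2 xy.
  have [eq1|lt1] := eqVneq (v x1) (v y1); last first.
    by rewrite -addSn leq_add ?rank_le ?rank_lt // lt_neqAle lt1.
  have [eq2|lt2] := eqVneq (v x2) (v y2).
    by move: xy; move/v_inj: eq1 => ->; move/v_inj: eq2 => ->; rewrite eqxx.
  by rewrite -addnS leq_add ?rank_le ?rank_lt ?eq1 // lt_neqAle lt2.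
have h_inj : {in S &, injective h}.
  move=> x y xS yS hxy; apply/eqP/negPn/negP => xy.
  case/orP: (noncrossing_comparable (nocross x y xS yS)) => /andP[le1 le2].
    by have := h_lt x y xS le1 le2 xy; rewrite hxy ltnn.
  by have := h_lt y x yS le1 le2; rewrite eq_sym hxy ltnn => /(_ xy).
rewrite cardE -(size_map h) -[(#|X| + #|Y|)%nat](size_iota 0).
apply: uniq_leq_size.
  by rewrite map_inj_in_uniq ?enum_uniq // => x y; rewrite !mem_enum; apply: h_inj.
move=> _ /mapP[[x1 x2] + ->]; rewrite mem_enum => /SXY /setXP[xX xY].
rewrite mem_iota add0n /=.
by rewrite -addSn leq_add ?rank_lt_card // ltnW ?rank_lt_card.
Qed.

Lemma crossings_setD1 (S : {set T * T}) x y : x \in S -> y \in S ->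
  crossing x y -> (crossings (S :\ x) + 2 <= crossings S)%nat.
Proof.
move=> xS yS cxy.
have yx : y != x.
  by apply: contraTneq cxy => ->; rewrite /crossing /opposite_signs !subrr mulr0 ltxx.
have yS' : y \in S :\ x by rewrite !inE yx.
rewrite /crossings (big_setD1 x xS) /=.
rewrite [X in (_ <= _ + X)%nat](eq_bigr (fun z =>
  crossing z x + \sum_(w in S :\ x) crossing z w))%nat;
  last by move=> z _; rewrite (big_setD1 x xS).
have pos_x : (0 < \sum_(z in S) crossing x z)%nat by rewrite (big_setD1 y yS) cxy.
have pos_y : (0 < \sum_(z in S :\ x) crossing z x)%nat.
  by rewrite (big_setD1 y yS') crossingC cxy.
by rewrite big_split /= addnA [leqRHS]addnC leq_add2l (leq_add pos_x pos_y).
Qed.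

(* Deleting one point of a crossing pair costs two points of the bound and
   removes at least two (ordered) crossings. *)
Lemma card_le_crossings (S : {set T * T}) (X Y : {set T}) :
  S \subset setX X Y -> (2 * #|S| <= 2 * (#|X| + #|Y|) + crossings S)%nat.
Proof.
move: {2}#|S| (leqnn #|S|) => n; elim: n S => [|n IH] S leSn SXY.
  by move: leSn; rewrite leqn0 cards_eq0 => /eqP ->; rewrite cards0.
have [[x y] /= /and3P[xS yS cxy]|nocross] :=
  pickP (fun p => [&& p.1 \in S, p.2 \in S & crossing p.1 p.2]).
  have cardS : #|S| = (#|S :\ x|).+1 by rewrite (cardsD1 x S) xS.
  have := IH (S :\ x); rewrite -ltnS -cardS => /(_ leSn).
  move=> /(_ (subset_trans (subsetDl S [set x]) SXY)).
  by rewrite cardS; have := crossings_setD1 xS yS cxy; lia.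
have nocrossS : {in S &, forall x y, ~~ crossing x y}.
  by move=> x y xS yS; have := nocross (x, y); rewrite /= xS yS /= => ->.
by have := noncrossing_card_le SXY nocrossS; lia.
Qed.

End GridCrossings.

Section BernoulliSampling.
Variables (T : finType) (q : R).

Definition bernoulli_weight (f : {ffun T -> bool}) : R :=
  \prod_t (if f t then q else 1 - q).

Local Notation w := bernoulli_weight.

Lemma bernoulli_moment (X : {set T}) :
  \sum_f w f * \prod_(t in X) (f t)%:R = q ^+ #|X|.
Proof.
pose F t (b : bool) := (if b then q else 1 - q) * (if t \in X then b%:R else 1).
transitivity (\sum_(f : {ffun T -> bool}) \prod_t F t (f t)).
  by apply: eq_bigr => f _; rewrite big_split /= [X in _ * X]big_mkcond.
rewrite -bigA_distr_bigA (eq_bigr (fun t => if t \in X then q else 1)).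
  by rewrite -big_mkcond prodr_const.
move=> t _; rewrite big_bool /F.
by case: (t \in X) => /=; ring.
Qed.

Lemma bernoulli_weight_sum : \sum_f w f = 1.
Proof.
have := bernoulli_moment set0; rewrite cards0 expr0 => <-.
by apply: eq_bigr => f _; rewrite big_set0 mulr1.
Qed.

Lemma bernoulli_moment1 t : \sum_f w f * (f t)%:R = q.
Proof.
have := bernoulli_moment [set t]; rewrite cards1 expr1 => <-.
by apply: eq_bigr => f _; rewrite big_set1.
Qed.

Lemma bernoulli_moment2 t t' : t != t' ->
  \sum_f w f * ((f t)%:R * (f t')%:R) = q ^+ 2.
Proof.
move=> tt'; have := bernoulli_moment [set t; t']; rewrite cards2 tt' => <-.
by apply: eq_bigr => f _; rewrite big_setU1 ?big_set1 ?inE.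
Qed.

Hypothesis q_ge0 : 0 <= q.
Hypothesis q_le1 : q <= 1.

Lemma bernoulli_weight_ge0 f : 0 <= w f.
Proof. by apply: prodr_ge0 => t _; case: (f t); rewrite ?subr_ge0. Qed.

Definition expect2 (F : {ffun T -> bool} -> {ffun T -> bool} -> R) : R :=
  \sum_f \sum_g w f * w g * F f g.

Lemma ler_expect2 F G : (forall f g, F f g <= G f g) -> expect2 F <= expect2 G.
Proof.
move=> FG; apply: ler_sum => f _; apply: ler_sum => g _.
by rewrite ler_wpM2l ?mulr_ge0 ?bernoulli_weight_ge0.
Qed.

Lemma eq_expect2 F G : (forall f g, F f g = G f g) -> expect2 F = expect2 G.
Proof. by move=> FG; apply: eq_bigr => f _; apply: eq_bigr => g _; rewrite FG. Qed.

Lemma expect2Z c F : expect2 (fun f g => c * F f g) = c * expect2 F.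
Proof.
rewrite /expect2 mulr_sumr; apply: eq_bigr => f _; rewrite mulr_sumr.
by apply: eq_bigr => g _; rewrite mulrCA.
Qed.

Lemma expect2D F G : expect2 (fun f g => F f g + G f g) = expect2 F + expect2 G.
Proof.
rewrite /expect2 -big_split; apply: eq_bigr => f _; rewrite -big_split.
by apply: eq_bigr => g _; rewrite mulrDr.
Qed.

Lemma expect2_sum_prod (I : finType) (a : I -> R) (F G : I -> {ffun T -> bool} -> R) :
  expect2 (fun f g => \sum_i a i * F i f * G i g) =
  \sum_i a i * (\sum_f w f * F i f) * (\sum_g w g * G i g).
Proof.
rewrite /expect2; under eq_bigr do under eq_bigr do rewrite mulr_sumr.
under eq_bigr do rewrite exchange_big /=.
rewrite exchange_big /=; apply: eq_bigr => i _.
rewrite -mulrA big_distrl mulr_sumr; apply: eq_bigr => f _ /=.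
rewrite big_distrr mulr_sumr; apply: eq_bigr => g _ /=.
ring.
Qed.

End BernoulliSampling.

Section CrossingLemma.
Variables (T : finType) (v : T -> R).
Hypothesis v_inj : injective v.

Lemma natr_crossings (S : {set T * T}) : ((crossings v S)%:R : R) =
  \sum_(p : (T * T) * (T * T)) [&& p.1 \in S, p.2 \in S & crossing v p.1 p.2]%:R.
Proof.
rewrite /crossings natr_sum; under eq_bigr do rewrite natr_sum.
rewrite pair_big big_mkcond /=; apply: eq_bigr => -[x y] _ /=.
by case: (x \in S) (y \in S) => [] [].
Qed.

Definition sample (S : {set T * T}) (f g : {ffun T -> bool}) : {set T * T} :=
  [set x in S | f x.1 && g x.2].

Lemma expect2_card_rows q :
  expect2 q (fun (f : {ffun T -> bool}) _ => #|[set t | f t]|%:R) = q * #|T|%:R.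
Proof.
rewrite (eq_expect2 q (G := fun f g => \sum_t 1 * (f t)%:R * 1)) ?expect2_sum_prod.
  rewrite (eq_bigr (fun _ => q)) ?sumr_const ?mulr_natr // => t _.
  rewrite bernoulli_moment1 (eq_bigr _ (fun g _ => mulr1 _)).
  by rewrite bernoulli_weight_sum; ring.
by move=> f g; rewrite natr_card; apply: eq_bigr => t _; rewrite inE mul1r mulr1.
Qed.

Lemma expect2_card_cols q :
  expect2 q (fun _ (g : {ffun T -> bool}) => #|[set t | g t]|%:R) = q * #|T|%:R.
Proof.
rewrite (eq_expect2 q (G := fun f g => \sum_t 1 * 1 * (g t)%:R)) ?expect2_sum_prod.
  rewrite (eq_bigr (fun _ => q)) ?sumr_const ?mulr_natr // => t _.
  rewrite bernoulli_moment1 (eq_bigr _ (fun f _ => mulr1 _)).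
  by rewrite bernoulli_weight_sum; ring.
by move=> f g; rewrite natr_card; apply: eq_bigr => t _; rewrite inE !mul1r.
Qed.

Lemma expect2_card_sample q S :
  expect2 q (fun f g => #|sample S f g|%:R) = q ^+ 2 * #|S|%:R.
Proof.
rewrite (eq_expect2 q (G := fun f g =>
  \sum_(x : T * T) (x \in S)%:R * (f x.1)%:R * (g x.2)%:R)) ?expect2_sum_prod.
  rewrite natr_card mulr_sumr; apply: eq_bigr => x _.
  by rewrite !bernoulli_moment1; ring.
move=> f g; rewrite natr_card; apply: eq_bigr => x _; rewrite inE.
by case: (x \in S) (f x.1) (g x.2) => [] [] [] /=; ring.
Qed.

Lemma expect2_crossings_sample q S :
  expect2 q (fun f g => (crossings v (sample S f g))%:R) = q ^+ 4 * (crossings v S)%:R.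
Proof.
pose c (p : (T * T) * (T * T)) := [&& p.1 \in S, p.2 \in S & crossing v p.1 p.2].
rewrite (eq_expect2 q (G := fun f g => \sum_p (c p)%:R
  * ((f p.1.1)%:R * (f p.2.1)%:R) * ((g p.1.2)%:R * (g p.2.2)%:R))) ?expect2_sum_prod.
  rewrite natr_crossings mulr_sumr; apply: eq_bigr => -[x y] _; rewrite /c /=.
  have [[_ _ cxy]|_] := and3P; last by rewrite !mul0r mulr0.
  by have /andP[ne1 ne2] := crossing_neq cxy; rewrite !bernoulli_moment2 //; ring.
move=> f g; rewrite natr_crossings; apply: eq_bigr => -[x y] _; rewrite /c !inE /=.
by case: (x \in S) (y \in S) (crossing v x y) (f x.1) (f y.1) (g x.2) (g y.2)
  => [] [] [] [] [] [] [] /=; ring.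
Qed.

Lemma crossings_sampling (S : {set T * T}) (q : R) : 0 <= q -> q <= 1 ->
  2 * q ^+ 2 * #|S|%:R <= 4 * q * #|T|%:R + q ^+ 4 * (crossings v S)%:R.
Proof.
move=> q_ge0 q_le1.
have := ler_expect2 q_ge0 q_le1 (F := fun f g => 2 * #|sample S f g|%:R)
  (G := fun f g => 2 * (#|[set t | f t]|%:R + #|[set t | g t]|%:R)
                   + (crossings v (sample S f g))%:R).
rewrite !expect2D !expect2Z expect2D expect2_card_sample expect2_card_rows.
rewrite expect2_card_cols expect2_crossings_sample.
have -> : 4 * q * #|T|%:R = 2 * (q * #|T|%:R + q * #|T|%:R) by ring.
rewrite mulrA; apply=> f g; rewrite -!natrD -!natrM -natrD ler_nat.
apply: (card_le_crossings v_inj).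
by apply/subsetP => -[x y]; rewrite !inE => /and3P[_ -> ->].
Qed.

(* Keep each row and each column independently with probability 4|T| / |S|. *)
Lemma crossing_lemma (S : {set T * T}) : (4 * #|T| <= #|S|)%nat ->
  #|S|%:R ^+ 3 <= 16 * #|T|%:R ^+ 2 * (crossings v S)%:R :> R.
Proof.
move=> card_ge.
have [T0|T_gt0] := posnP #|T|.
  have := max_card (mem S); rewrite card_prod T0 leqn0 => /eqP ->.
  by rewrite mulr0n expr0n /= !mulr_ge0 ?exprn_ge0.
set m : R := #|S|%:R; set n : R := #|T|%:R; set cr : R := (crossings v S)%:R.
have n_gt0 : 0 < n by rewrite ltr0n.
have m_ge : 4 * n <= m by rewrite -(natrM R 4) ler_nat.
have m_gt0 : 0 < m by apply: lt_le_trans m_ge; rewrite mulr_gt0.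
pose q := 4 * n / m.
have q_gt0 : 0 < q by rewrite divr_gt0 ?mulr_gt0.
have qm : q * m = 4 * n by rewrite mulfVK ?gt_eqF.
have := crossings_sampling S (ltW q_gt0); rewrite ler_pdivrMr // mul1r => /(_ m_ge).
rewrite -/m -/n -/cr => sampling.
have sampled_pairs : 2 * q ^+ 2 * m = 8 * q * n.
  have -> : 2 * q ^+ 2 * m = 2 * q * (q * m) by ring.
  by rewrite qm; ring.
have key : 4 * n <= q ^+ 3 * cr.
  by rewrite -(ler_pM2l q_gt0); rewrite sampled_pairs in sampling; lra.
rewrite -(ler_pM2l (mulr_gt0 (ltr0n R 4) n_gt0)).
have -> : 4 * n * (16 * n ^+ 2 * cr) = q ^+ 3 * cr * m ^+ 3.
  by rewrite [RHS]mulrAC -exprMn qm; ring.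
by apply: ler_wpM2r => //; rewrite exprn_ge0 // ltW.
Qed.

End CrossingLemma.

Section LineValues.
Variables (I : finType) (a b : I -> R) (C P : {fset R}).
Hypothesis line_inj : injective (fun i => (a i, b i)).
Hypothesis line_in : forall i x, x \in C -> a i * x + b i \in P.
Variable p0 : P.

(* The default p0 is only used off C, where a line may leave P. *)
Definition line_value (x : R) (i : I) : P := insubd p0 (a i * x + b i).

Lemma val_line_value x i : x \in C -> val (line_value x i) = a i * x + b i.
Proof. by move=> xC; rewrite val_insubd line_in. Qed.

Definition strip (x y : R) : {set P * P} :=
  [set (line_value x i, line_value y i) | i in I].

Lemma strip_point_inj x y : x \in C -> y \in C -> x != y ->
  injective (fun i => (line_value x i, line_value y i)).
Proof.
move=> xC yC xy i j [/(congr1 val) + /(congr1 val)].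
rewrite !val_line_value // => ex ey.
have /eqP : (a i - a j) * (x - y) = 0 by rewrite mulrBl !mulrBr; lra.
rewrite mulf_eq0 !subr_eq0 (negbTE xy) orbF => /eqP eq_a.
by apply: line_inj; rewrite /= eq_a; congr pair; rewrite eq_a in ex; lra.
Qed.

Lemma card_strip x y : x \in C -> y \in C -> x != y -> #|strip x y| = #|I|.
Proof. by move=> xC yC xy; rewrite card_imset //; apply: strip_point_inj. Qed.

Lemma crossings_strip x y : x \in C -> y \in C -> x != y ->
  (crossings val (strip x y))%:R =
  \sum_i \sum_j (opposite_signs ((a i - a j) * x + (b i - b j))
                                ((a i - a j) * y + (b i - b j)))%:R :> R.
Proof.
move=> xC yC xy; have inj := strip_point_inj xC yC xy.
rewrite /crossings natr_sum big_imset; last exact: in2W.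
apply: eq_big => // i _; rewrite natr_sum big_imset; last exact: in2W.
apply: eq_big => // j _.
by rewrite /crossing /= !val_line_value //; congr (opposite_signs _ _)%:R; ring.
Qed.

End LineValues.

Lemma card_lines_values (I : finType) (a b : I -> R) (C P : {fset R}) :
  injective (fun i => (a i, b i)) ->
  (forall i x, x \in C -> a i * x + b i \in P) ->
  (4 * #|` P| <= #|I|)%nat ->
  ((#|` C| - 1) * #|I| <= 16 * (#|` P| * #|` P|))%nat.
Proof.
move=> line_inj line_in m_ge.
have [C_le1|C_gt1] := leqP #|` C| 1; first by move: C_le1; rewrite -subn_eq0 => /eqP ->.
have [c0 c0C] : exists c0, c0 \in C by apply/fset0Pn; rewrite -cardfs_gt0; lia.
have [I0|/card_gt0P[i0 _]] := posnP #|I|; first by rewrite I0 muln0.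
pose p0 : P := [` line_in i0 c0 c0C].
pose cs := sort <=%R (enum_fset C).
have cs_sorted : sorted <=%R cs by apply: sort_le_sorted.
have size_cs : size cs = #|` C| by rewrite size_sort.
have cs_C i : (i < size cs)%nat -> cs`_i \in C.
  by move=> ?; rewrite -(mem_sort <=%R) mem_nth.
have cs_uniq : uniq cs by rewrite sort_uniq fset_uniq.
have cs_neq i : (i.+1 < size cs)%nat -> cs`_i != cs`_(i.+1).
  by move=> ilt; rewrite (nth_uniq 0 _ ilt cs_uniq) ?(ltnW ilt) // neq_ltn ltnSn.
pose cr (i : 'I_(size cs).-1) :=
  ((crossings val (strip a b p0 cs`_i cs`_(i.+1)))%:R : R).
have cs_step (i : 'I_(size cs).-1) :
    cs`_i \in C /\ cs`_(i.+1) \in C /\ cs`_i != cs`_(i.+1).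
  have i_lt : (i.+1 < size cs)%nat by have := ltn_ord i; lia.
  by rewrite !cs_C ?cs_neq // ltnW.
have lower i : #|I|%:R ^+ 3 <= 16 * #|` P|%:R ^+ 2 * cr i.
  have [xC [yC xy]] := cs_step i.
  have := crossing_lemma val_inj (S := strip a b p0 cs`_i cs`_(i.+1)).
  by rewrite (card_strip line_inj line_in) // -cardfE => /(_ m_ge).
have upper : \sum_i cr i <= #|I|%:R ^+ 2.
  have cr_E i : cr i = \sum_l \sum_l' (opposite_signs
      ((a l - a l') * cs`_i + (b l - b l'))
      ((a l - a l') * cs`_(i.+1) + (b l - b l')))%:R.
    by have [xC [yC xy]] := cs_step i; rewrite /cr (crossings_strip line_inj line_in).
  under eq_bigr do rewrite cr_E.
  rewrite exchange_big; under eq_bigr do rewrite exchange_big /=.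
  apply: (@le_trans _ _ (\sum_(l : I) \sum_(l' : I) 1)).
    by do 2!(apply: ler_sum => ? _); apply: affine_sign_changes.
  by rewrite !sumr_const expr2 mulr_natr.
have m_gt0 : 0 < #|I|%:R :> R by rewrite ltr0n; apply/card_gt0P; exists i0.
have bound : #|I|%:R ^+ 3 *+ (size cs).-1 <= 16 * #|` P|%:R ^+ 2 * #|I|%:R ^+ 2 :> R.
  apply: (@le_trans _ _ (\sum_(i < (size cs).-1) 16 * #|` P|%:R ^+ 2 * cr i)).
    by rewrite -[in X in X <= _](card_ord (size cs).-1) -sumr_const; apply: ler_sum.
  by rewrite -mulr_sumr ler_wpM2l ?mulr_ge0 ?exprn_ge0.
rewrite size_cs in bound; rewrite -(ler_nat R) subn1 !natrM.
rewrite -(ler_pM2r (exprn_gt0 2 m_gt0)).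
have -> : #|` C|.-1%:R * #|I|%:R * #|I|%:R ^+ 2 = #|I|%:R ^+ 3 *+ #|` C|.-1 :> R.
  by rewrite -mulr_natl; ring.
by have -> : 16 * (#|` P|%:R * #|` P|%:R) * #|I|%:R ^+ 2 =
  16 * #|` P|%:R ^+ 2 * #|I|%:R ^+ 2 :> R by ring.
Qed.

Lemma fsetD1_neq0 (K : choiceType) (X : {fset K}) (x : K) :
  X != fset0 -> X != [fset x] -> X `\ x != fset0.
Proof.
move=> X_neq0 X_neq1; apply: contra X_neq1 => /eqP Xx0.
have : X `<=` [fset x] by rewrite -fsetD_eq0 Xx0.
by rewrite fsubset1 (negbTE X_neq0) orbF.
Qed.

Lemma leq_card_fset_in (K K' : choiceType) (f : K -> K')
    (X : {fset K}) (Y : {fset K'}) :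
  {in X &, injective f} -> (forall x, x \in X -> f x \in Y) -> (#|` X| <= #|` Y|)%nat.
Proof.
move=> f_inj fXY; have /card_in_imfsetP/eqP <- := f_inj; apply: fsubset_leq_card.
by apply/fsubsetP => _ /imfsetP[x /= xX ->]; apply: fXY.
Qed.

Lemma mem_sumset (B C : {fset R}) b c : b \in B -> c \in C -> b + c \in sumset B C.
Proof. by move=> bB cC; apply/imfset2P; exists b => //; exists c. Qed.

Lemma mem_prodset (A X : {fset R}) a x : a \in A -> x \in X -> a * x \in prodset A X.
Proof. by move=> aA xX; apply/imfset2P; exists a => //; exists x. Qed.

(* The lines x |-> a (b + x), for a in A' and b in B. *)
Lemma sumset_strips_bound (A A' B C : {fset R}) : 0 \notin A' -> A' `<=` A ->
  (4 * #|` prodset A (sumset B C)| <= #|` A'| * #|` B|)%nat ->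
  ((#|` C| - 1) * (#|` A'| * #|` B|)
    <= 16 * (#|` prodset A (sumset B C)| * #|` prodset A (sumset B C)|))%nat.
Proof.
move=> A'0 /fsubsetP A'A.
have card_I : #|{: A' * B}| = (#|` A'| * #|` B|)%nat by rewrite card_prod -!cardfE.
rewrite -card_I; apply: (card_lines_values (a := fun l : A' * B => val l.1)
  (b := fun l => val l.1 * val l.2)) => [[u v] [u' v']|[u v] x xC] /=.
  case=> eq_u; have u_neq0 : val u != 0 by apply: contraNneq A'0 => <-; apply: valP.
  by rewrite -eq_u => /(mulfI u_neq0) eq_v; congr pair; apply: val_inj.
rewrite -mulrDr addrC; apply: mem_prodset; last exact: mem_sumset.
exact/A'A/valP.
Qed.

Lemma mul3_leq_64sq (a a' b k n : nat) :
  (a <= 2 * a')%nat -> (a' <= n)%nat -> (b <= n)%nat -> (k <= n)%nat ->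
  ((4 * n <= a' * b)%nat -> ((k - 1) * (a' * b) <= 16 * (n * n))%nat) ->
  (a * b * k <= 64 * (n * n))%nat.
Proof.
move=> le_a le_a' le_b le_k strips.
have le_abk : (a * b * k <= 2 * (a' * b * k))%nat by rewrite !mulnA !leq_mul.
have [m_ge|m_lt] := leqP (4 * n) (a' * b); last first.
  by have := leq_mul (ltnW m_lt) le_k; lia.
have := strips m_ge; have [k_le1|k_gt1] := leqP k 1.
  have : (a' * b <= n * n)%nat by apply: leq_mul.
  have : (a' * b * k <= a' * b)%nat by rewrite -[leqRHS]muln1 leq_mul2l k_le1 orbT.
  lia.
have : (a' * b * k <= 2 * ((k - 1) * (a' * b)))%nat.
  by rewrite [leqRHS]mulnA [leqRHS]mulnC leq_mul2l; lia.
lia.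
Qed.

Lemma card_prodset_sumset (A B C : {fset R}) :
  A != [fset 0] -> sumset B C != [fset 0] ->
  (#|` A| * #|` B| * #|` C|
    <= 64 * (#|` prodset A (sumset B C)| * #|` prodset A (sumset B C)|))%nat.
Proof.
move=> A_neq1 S_neq1; set P := prodset A (sumset B C); set n := #|` P|.
have [->|A_neq0] := eqVneq A fset0; first by rewrite cardfs0.
have [->|/fset0Pn[b0 b0B]] := eqVneq B fset0; first by rewrite cardfs0 muln0.
have [->|/fset0Pn[c0 c0C]] := eqVneq C fset0; first by rewrite cardfs0 muln0.
set A' := A `\ 0.
have /fset0Pn[a0 /fsetD1P[a0_neq0 a0A]] := fsetD1_neq0 A_neq0 A_neq1.
have S_neq0 : sumset B C != fset0 by apply/fset0Pn; exists (b0 + c0); apply: mem_sumset.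
have /fset0Pn[s0 /fsetD1P[s0_neq0 s0S]] := fsetD1_neq0 S_neq0 S_neq1.
have card_C : (#|` C| <= n)%nat.
  apply: (leq_card_fset_in (f := fun c => a0 * (b0 + c))) => [x y _ _|x xC].
    by move/(mulfI a0_neq0)/addrI.
  by apply: mem_prodset => //; apply: mem_sumset.
have card_B : (#|` B| <= n)%nat.
  apply: (leq_card_fset_in (f := fun b => a0 * (b + c0))) => [x y _ _|x xB].
    by move/(mulfI a0_neq0)/addIr.
  by apply: mem_prodset => //; apply: mem_sumset.
have card_A' : (#|` A'| <= n)%nat.
  apply: (leq_card_fset_in (f := fun a => a * s0)) => [x y _ _ /(mulIf s0_neq0) //|x].
  by move=> /fsetD1P[_ xA]; apply: mem_prodset.
have card_A : (#|` A| <= 2 * #|` A'|)%nat.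
  have A'_gt0 : (0 < #|` A'|)%nat.
    by rewrite cardfs_gt0; apply/fset0Pn; exists a0; apply/fsetD1P.
  rewrite (cardfsD1 0 A) -/A' mul2n -addnn leq_add2r.
  exact: leq_trans (leq_b1 _) A'_gt0.
have strips := @sumset_strips_bound A A' B C (negbT (fsetD11 _ _)) (fsubsetDl _ _).
rewrite -/P -/n in strips.
exact: mul3_leq_64sq card_A card_A' card_B card_C strips.
Qed.

Theorem lemma3p3 :
  exists c : R, 0 < c /\
    forall A B C : {fset R},
      A != [fset (0 : R)] ->
      sumset B C != [fset (0 : R)] ->
      c * Num.sqrt ((#|` A| * #|` B| * #|` C|)%:R : R)
        <= (#|` prodset A (sumset B C)|)%:R.
Proof.
exists 8^-1; split => [|A B C A_neq1 S_neq1]; first by rewrite invr_gt0.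
have := card_prodset_sumset A_neq1 S_neq1.
set N := (_ * _ * _)%nat; set n := #|` _| => le_N.
rewrite mulrC ler_pdivrMr // -[leRHS]ger0_norm ?mulr_ge0 // -sqrtr_sqr.
by rewrite ler_wsqrtr // exprMn -!natrX -natrM ler_nat mulnC -mulnn.
Qed.
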